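(* Let $t,\ell,m$ be integers with $1 \le t \le \ell \le m$. Then $$\hat{w}_1(t;\ell,m)=q^{\ell+m-2}\,\nu_{t-1}(\ell-1,m-1).$$
   Context: $q$ is a prime power and $\mathbb{F}_q$ the field with $q$ elements. For nonnegative integers $a,b,t$, $\mu_t(a,b)$ denotes the number of $a\times b$ matrices over $\mathbb{F}_q$ of rank exactly $t$ (so $\mu_0(a,b)=1$), and $\nu_t(a,b)=\sum_{s=0}^{t}\mu_s(a,b)$ is the number of $a\times b$ matrices over $\mathbb{F}_q$ of rank at most $t$. For an $\ell\times m$ matrix $M=(m_{ij})$ and $0\le r\le \ell$, the $r$-th partial trace is $\tau_r(M)=m_{11}+m_{22}+\cdots+m_{rr}$ (with $\tau_0=0$). For $0\le r\le \ell$ and $1\le t\le \ell$, define $$\hat{w}_r(t;\ell,m)=\frac{1}{q-1}\,\bigl|\{M\in \mathrm{Mat}_{\ell\times m}(\mathbb{F}_q): 1\le \mathrm{rk}(M)\le t,\ \tau_r(M)\ne 0\}\bigr|.$$ *)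

From HB Require Import structures.
From mathcomp Require Import all_boot all_order all_algebra.
Set Implicit Arguments. Unset Strict Implicit. Unset Printing Implicit Defensive.
Import GRing.Theory.

Definition mu (F : finFieldType) (t a b : nat) : nat :=
  #|[set A : 'M[F]_(a, b) | \rank A == t]|.

Definition nu (F : finFieldType) (t a b : nat) : nat :=
  \sum_(0 <= s < t.+1) mu F s a b.

Definition ptrace (F : finFieldType) (l m r : nat) (M : 'M[F]_(l, m)) : F :=
  (\sum_(i < l | (i < r)%N) \sum_(j < m | nat_of_ord j == nat_of_ord i) M i j)%R.

Definition what (F : finFieldType) (r t l m : nat) : rat :=
  ((#|[set M : 'M[F]_(l, m) | (1 <= \rank M <= t)%N && (ptrace r M != 0%R)]|)%:R
    / (#|F|.-1)%:R)%R.

From HB Require Import structures.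
From mathcomp Require Import all_boot all_order all_algebra.
Set Implicit Arguments. Unset Strict Implicit. Unset Printing Implicit Defensive.
Import GRing.Theory.
Local Open Scope ring_scope.

(* Write an (l+1) x (m+1) matrix in block form with corner a = tau_1(M).
   When a != 0, Gaussian elimination on the first row and column (a Schur
   complement) shows that
       M = [[a, u], [v, N + a^-1 v u]]   has rank   1 + rank N,
   and (a, u, v, N) |-> M is a bijection from F^* x F^m x F^l x Mat_(l,m)
   onto the matrices with nonzero corner.  Hence the matrices with
   tau_1(M) != 0 and 1 <= rank M <= t correspond exactly to the tuples with
   a != 0 and rank N <= t - 1, of which there are (q-1) q^(l+m) nu_(t-1)(l,m);
   dividing by q - 1 gives the formula. *)

Section SchurComplement.
Variables (F : fieldType) (l m : nat).

(* Clearing the first row and column of a matrix with invertible corner a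
   leaves the Schur complement N: the rank drops by exactly one. *)
Lemma rank_corner_schur (a : F) (u : 'rV[F]_m) (v : 'cV[F]_l) (N : 'M[F]_(l, m)) :
  a != 0 -> \rank (block_mx a%:M u v (N + a^-1 *: (v *m u))) = (1 + \rank N)%N.
Proof.
move=> a_neq0; set M := block_mx _ _ _ _.
set L : 'M[F]_(1 + l) := block_mx 1%:M 0 (- (a^-1 *: v)) 1%:M.
set R : 'M[F]_(1 + m) := block_mx 1%:M (- (a^-1 *: u)) 0 1%:M.
have L_unit : L \in unitmx by rewrite unitmxE det_lblock !det1 mulr1 unitr1.
have R_unit : R \in unitmx by rewrite unitmxE det_ublock !det1 mulr1 unitr1.
have clear_u : a%:M *m - (a^-1 *: u) + u = 0.
  by rewrite mul_scalar_mx scalerN scalerA mulfV // scale1r addNr.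
have clear_v : - (a^-1 *: v) *m a%:M + v = 0.
  by rewrite mul_mx_scalar scalerN scalerA mulfV // scale1r addNr.
have elim_LMR : L *m M *m R = block_mx a%:M 0 0 N.
  rewrite /L /R !mulmx_block !mul1mx !mul0mx !mulmx1 !mulmx0 !addr0.
  by rewrite clear_u clear_v mul0mx add0r mulNmx -scalemxAl addrCA addNr addr0.
transitivity (\rank (L *m M *m R)).
  by rewrite mxrankMfree ?row_free_unit // eqmxMfull ?row_full_unit.
by rewrite elim_LMR rank_diag_block_mx mxrank_unit // unitmxE det_scalar1 unitfE.
Qed.

Definition corner_param (x : F * 'rV[F]_m * 'cV[F]_l * 'M[F]_(l, m)) :
    'M[F]_(1 + l, 1 + m) :=
  let: (a, u, v, N) := x in block_mx a%:M u v (N + a^-1 *: (v *m u)).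

Definition corner_coords (M : 'M[F]_(1 + l, 1 + m)) :
    F * 'rV[F]_m * 'cV[F]_l * 'M[F]_(l, m) :=
  (M ord0 ord0, ursubmx M, dlsubmx M,
   drsubmx M - (M ord0 ord0)^-1 *: (dlsubmx M *m ursubmx M)).

Lemma block_mx_corner (a : F) (u : 'rV[F]_m) (v : 'cV[F]_l) (N : 'M[F]_(l, m)) :
  block_mx a%:M u v N ord0 ord0 = a.
Proof.
have corner i j : i = lshift l ord0 -> j = lshift m ord0 -> block_mx a%:M u v N i j = a.
  by move=> -> ->; rewrite block_mxEul mxE eqxx mulr1n.
by apply: corner; apply: val_inj.
Qed.

Lemma ulsubmx_corner (M : 'M[F]_(1 + l, 1 + m)) : ulsubmx M = (M ord0 ord0)%:M.
Proof.
by apply/matrixP => i j; rewrite !ord1 !mxE /=; congr (M _ _); apply: val_inj.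
Qed.

(* The two maps are mutually inverse (no condition on a is needed, since
   0^-1 = 0), so the parametrisation is a bijection. *)
Lemma corner_paramK : cancel corner_param corner_coords.
Proof.
move=> [[[a u] v] N]; rewrite /corner_coords block_mx_corner.
by rewrite block_mxKur block_mxKdl block_mxKdr addrK.
Qed.

Lemma corner_coordsK : cancel corner_coords corner_param.
Proof. by move=> M; rewrite /= subrK -ulsubmx_corner submxK. Qed.

Lemma rank_corner_param x :
  x.1.1.1 != 0 -> \rank (corner_param x) = (1 + \rank x.2)%N.
Proof. by case: x => [[[a u] v] N] /= /rank_corner_schur->. Qed.

End SchurComplement.
Arguments corner_param {F l m} x.
Arguments corner_paramK {F l m}.

Lemma card_rank_le (F : finFieldType) (a b n : nat) :
  #|[set A : 'M[F]_(a, b) | (\rank A <= n)%N]| = nu F n a b.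
Proof.
rewrite /nu /mu; elim: n => [|n IH].
  by rewrite big_nat1; apply: eq_card => A; rewrite !inE leqn0.
rewrite big_nat_recr //= -IH -(cardsID [set A | (\rank A <= n)%N]).
congr (_ + _)%N; apply: eq_card => A; rewrite !inE.
  by apply/andP/idP => [[]|rk_le] //; rewrite leqW.
by rewrite -ltnNge eqn_leq andbC.
Qed.

Section CornerCount.
Variables (F : finFieldType) (l m : nat).

Lemma corner_rank_set (t : nat) :
  [set M : 'M[F]_(1 + l, 1 + m) | (1 <= \rank M <= t.+1)%N && (M ord0 ord0 != 0)] =
  corner_param @: [set x | (x.1.1.1 != 0) && (\rank x.2 <= t)%N].
Proof.
apply/setP => M; rewrite inE; apply/andP/imsetP => [[/andP[_ rk_le] a_neq0] | ].
  exists (corner_coords M); last by rewrite corner_coordsK.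
  by rewrite inE a_neq0 -ltnS -add1n -rank_corner_param // corner_coordsK.
move=> [[[[a u] v] N]]; rewrite inE => /andP[/= a_neq0 rk_N] ->.
by rewrite block_mx_corner (rank_corner_param (x := (a, u, v, N))) // add1n ltnS.
Qed.

Lemma card_corner_rank (t : nat) :
  #|[set M : 'M[F]_(1 + l, 1 + m) | (1 <= \rank M <= t.+1)%N && (M ord0 ord0 != 0)]|
  = (#|F|.-1 * #|F| ^ (m + l) * nu F t l m)%N.
Proof.
rewrite corner_rank_set card_imset; last exact: can_inj corner_paramK.
have -> : [set x : F * 'rV[F]_m * 'cV[F]_l * 'M[F]_(l, m) | (x.1.1.1 != 0) && (\rank x.2 <= t)%N]
    = setX (setX (setX [set~ 0] setT) setT) [set N : 'M[F]_(l, m) | (\rank N <= t)%N].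
  by apply/setP => x; rewrite !inE !andbT.
rewrite !cardsX cardsC1 !cardsT !card_mx card_rank_le.
by rewrite mul1n muln1 expnD mulnA.
Qed.

End CornerCount.

Lemma ptrace1_corner (F : finFieldType) (l m : nat) (M : 'M[F]_(l.+1, m.+1)) :
  ptrace 1 M = M ord0 ord0.
Proof.
rewrite /ptrace (big_pred1 ord0) => [|i]; last by rewrite /= ltnS leqn0.
by rewrite (big_pred1 ord0).
Qed.

Local Close Scope ring_scope.

Theorem proposition1 (F : finFieldType) (t l m : nat) :
  1 <= t -> t <= l -> l <= m ->
  what F 1 t l m = ((#|F| ^ (l + m - 2) * nu F t.-1 l.-1 m.-1)%N)%:R%R.
Proof.
case: t => [//|t] _; case: l => [//|l] _; case: m => [//|m] _.
have units_pos : 0 < #|F|.-1 by rewrite -subn1 subn_gt0 card_finNzRing_gt1.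
have tau1_corner :
    [set M : 'M[F]_(l.+1, m.+1) | (1 <= \rank M <= t.+1) && (ptrace 1 M != 0%R)] =
    [set M : 'M[F]_(1 + l, 1 + m) | (1 <= \rank M <= t.+1) && (M ord0 ord0 != 0%R)].
  by apply/setP => M; rewrite !inE ptrace1_corner.
rewrite /what tau1_corner card_corner_rank -mulnA natrM mulrC mulKf.
  by rewrite addSn addnS subn2 addnC.
by rewrite Num.Theory.pnatr_eq0 -lt0n.
Qed.
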